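(* Consider a system of miners and clients communicating by message passing, in which clients broadcast transactions to the miners inside protocol messages and transactions are recorded in blocks of a valid blockchain $BT$. Suppose a (Byzantine) miner $M$ executes a front-running attack: it reads an unconfirmed transaction $t_x$ (i.e., it delivers the message $m_x$ containing $t_x$) and afterwards broadcasts its own transaction $t_y$ (in a message $m_y$), and the attack succeeds, i.e., $t_y$ is recorded before $t_x$ in the consensus chain of $BT$. Then $t_x \rightarrow t_y$ (equivalently $m_x \rightarrow m_y$), and so recording $t_y$ before $t_x$ violates causal ordering (strong safety): a front-running attack is a violation of causal ordering.
   Context: Happens-before relation $\rightarrow$ on messages: (1) the set of messages delivered from any process $p_i$ by a process is totally ordered by $\rightarrow$; (2) if $p_i$ sent or delivered message $m$ before sending message $m'$, then $m\rightarrow m'$; (3) $\rightarrow$ is transitive. For transactions $t_1,t_2$ contained in messages $m_1,m_2$, $t_1\rightarrow t_2$ iff $m_1\rightarrow m_2$. The causal past $CP(t)$ of a transaction $t$ is the set of transactions $t'$ with $t'\rightarrow t$. Strong safety (causal ordering) for a blockchain $BT$ requires: for every transaction $t$ and every $t'\in CP(t)$, $t'$ is recorded in $BT$ before $t$; for messages it requires that for all $m'\in CP(m)$ sent to the same correct processes, no correct process delivers (consumes) $m$ before $m'$. A block contains a totally ordered sequence of transactions and the hash of its parent block; a blockchain is a tree of blocks; its consensus chain is a sequence of blocks $B_0,B_1,\dots,B_l$ from the genesis block with $B_k$ the parent of $B_{k+1}$, of maximal depth; $BT$ is valid if it has exactly one consensus chain. Transaction $t_y$ is recorded before $t_x$ in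 the consensus chain if it lies in an earlier block, or in the same block ordered before $t_x$. A front-running attack: a Byzantine miner reads an unconfirmed transaction $t_x$ and broadcasts/mines its own transaction $t_y$ with the intention of recording $t_y$ before $t_x$ in the consensus chain of a valid blockchain. *)

From Stdlib Require Import List Arith Lia.
Import ListNotations.
Set Implicit Arguments.

Inductive event (Msg : Type) : Type :=
| ESend : Msg -> event Msg
| EDeliver : Msg -> event Msg.
Arguments ESend {Msg} _.
Arguments EDeliver {Msg} _.

Definition occurs_before {A : Type} (l : list A) (e1 e2 : A) : Prop :=
  exists l1 l2 l3, l = l1 ++ e1 :: l2 ++ e2 :: l3.

Inductive hb {Proc Msg : Type} (hist : Proc -> list (event Msg))
    (sender : Msg -> Proc) : Msg -> Msg -> Prop :=
| hb_deliv_order : forall (q : Proc) (m m' : Msg),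
    sender m = sender m' ->
    occurs_before (hist q) (EDeliver m) (EDeliver m') ->
    hb hist sender m m'
| hb_send_after_send : forall (p : Proc) (m m' : Msg),
    occurs_before (hist p) (ESend m) (ESend m') -> hb hist sender m m'
| hb_send_after_deliver : forall (p : Proc) (m m' : Msg),
    occurs_before (hist p) (EDeliver m) (ESend m') -> hb hist sender m m'
| hb_trans : forall m1 m2 m3,
    hb hist sender m1 m2 -> hb hist sender m2 m3 -> hb hist sender m1 m3.

Definition hb_tx {Proc Msg Tx : Type} (hist : Proc -> list (event Msg))
    (sender : Msg -> Proc) (contains : Msg -> Tx -> Prop) (t1 t2 : Tx) : Prop :=
  exists m1 m2, contains m1 t1 /\ contains m2 t2 /\ hb hist sender m1 m2.

Definition CP {Proc Msg Tx : Type} (hist : Proc -> list (event Msg))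
    (sender : Msg -> Proc) (contains : Msg -> Tx -> Prop) (t : Tx) : Tx -> Prop :=
  fun t' => hb_tx hist sender contains t' t.

Record block (Tx Hash : Type) := mkBlock { btxs : list Tx ; bparent : Hash }.

Section Blockchain.
Variables (Tx Hash : Type) (hash : block Tx Hash -> Hash)
          (genesis : block Tx Hash).

(** A blockchain is a tree of blocks, given by its set of blocks [BT]
    (the tree structure is given by parent hashes). *)
Definition blocktree := list (block Tx Hash).

Definition is_chain (BT : blocktree) (c : list (block Tx Hash)) : Prop :=
  hd_error c = Some genesis /\
  (forall B, In B c -> In B BT) /\
  (forall k B B', nth_error c k = Some B -> nth_error c (S k) = Some B' ->
     bparent B' = hash B).

Definition consensus_chain (BT : blocktree) (c : list (block Tx Hash)) : Prop :=
  is_chain BT c /\ forall c', is_chain BT c' -> length c' <= length c.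

Definition valid (BT : blocktree) : Prop :=
  exists c, consensus_chain BT c /\ forall c', consensus_chain BT c' -> c' = c.

Definition recorded (BT : blocktree) (t : Tx) : Prop :=
  exists c, consensus_chain BT c /\ exists B, In B c /\ In t (btxs B).

Definition recorded_before (BT : blocktree) (ty tx : Tx) : Prop :=
  exists c, consensus_chain BT c /\
    exists k l Bk Bl, nth_error c k = Some Bk /\ nth_error c l = Some Bl /\
      ((k < l /\ In ty (btxs Bk) /\ In tx (btxs Bl)) \/
       (k = l /\ occurs_before (btxs Bk) ty tx)).

End Blockchain.

Definition strong_safety {Proc Msg Tx Hash : Type}
    (hist : Proc -> list (event Msg)) (sender : Msg -> Proc)
    (contains : Msg -> Tx -> Prop)
    (hash : block Tx Hash -> Hash) (genesis : block Tx Hash)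
    (BT : blocktree Tx Hash) : Prop :=
  forall t t', recorded hash genesis BT t ->
    CP hist sender contains t t' -> recorded_before hash genesis BT t' t.

(** A miner that delivers [m_x] and then sends [m_y] puts [m_x] before [m_y]
    in happens-before by rule (2), hence [t_x] is in the causal past of [t_y].
    Strong safety would then force [t_x] to be recorded before [t_y] in the
    consensus chain; but a valid blockchain has a single consensus chain, and
    once its transactions are flattened into one duplicate-free sequence,
    "recorded before" becomes "occurs before" in that sequence, which is
    asymmetric. *)

From Stdlib Require Import List Arith Lia.

Section OccursBefore.
Context {A : Type}.

Lemma occurs_before_nth_error (l : list A) (a b : A) :
  occurs_before l a b ->
  exists i j, i < j /\ nth_error l i = Some a /\ nth_error l j = Some b.
Proof.
  intros (l1 & l2 & l3 & ->).
  exists (length l1), (length l1 + S (length l2)).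
  split; [lia | split].
  - rewrite nth_error_app2, Nat.sub_diag by lia. reflexivity.
  - rewrite nth_error_app2 by lia.
    replace (length l1 + S (length l2) - length l1) with (S (length l2)) by lia.
    simpl. rewrite nth_error_app2, Nat.sub_diag by lia. reflexivity.
Qed.

Lemma occurs_before_asym (l : list A) (a b : A) :
  NoDup l -> occurs_before l a b -> ~ occurs_before l b a.
Proof.
  intros Hnodup Hab Hba.
  apply occurs_before_nth_error in Hab as (i & j & Hij & Hi & Hj).
  apply occurs_before_nth_error in Hba as (i' & j' & Hij' & Hi' & Hj').
  pose proof (proj1 (NoDup_nth_error l) Hnodup) as Hinj.
  assert (i = j') by (apply Hinj; [apply nth_error_Some; congruence | congruence]).
  assert (j = i') by (apply Hinj; [apply nth_error_Some; congruence | congruence]).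
  lia.
Qed.

Lemma occurs_before_app_l (p l : list A) (a b : A) :
  occurs_before l a b -> occurs_before (p ++ l) a b.
Proof.
  intros (l1 & l2 & l3 & ->). exists (p ++ l1), l2, l3.
  now rewrite app_assoc.
Qed.

Lemma occurs_before_app_r (l r : list A) (a b : A) :
  occurs_before l a b -> occurs_before (l ++ r) a b.
Proof.
  intros (l1 & l2 & l3 & ->). exists l1, l2, (l3 ++ r).
  now rewrite <- app_assoc, <- app_comm_cons, <- app_assoc.
Qed.

Lemma occurs_before_concat_same (ls : list (list A)) k (xs : list A) (a b : A) :
  nth_error ls k = Some xs -> occurs_before xs a b ->
  occurs_before (concat ls) a b.
Proof.
  intros Hk Hab.
  destruct (nth_error_split ls k Hk) as (ls1 & ls2 & -> & _).
  rewrite concat_app. apply occurs_before_app_l.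
  simpl. now apply occurs_before_app_r.
Qed.

Lemma occurs_before_concat_lt (ls : list (list A)) k l (xs ys : list A) (a b : A) :
  k < l -> nth_error ls k = Some xs -> nth_error ls l = Some ys ->
  In a xs -> In b ys -> occurs_before (concat ls) a b.
Proof.
  intros Hkl Hk Hl Ha Hb.
  destruct (nth_error_split ls k Hk) as (ls1 & ls2 & -> & Hlen).
  rewrite nth_error_app2 in Hl by lia.
  replace (l - length ls1) with (S (l - length ls1 - 1)) in Hl by lia.
  destruct (nth_error_split ls2 _ Hl) as (ls3 & ls4 & -> & _).
  destruct (in_split _ _ Ha) as (x1 & x2 & ->).
  destruct (in_split _ _ Hb) as (y1 & y2 & ->).
  rewrite concat_app. apply occurs_before_app_l.
  exists x1, (x2 ++ concat ls3 ++ y1), (y2 ++ concat ls4).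
  simpl. rewrite concat_app. simpl.
  now repeat (rewrite <- app_assoc; simpl).
Qed.

End OccursBefore.

Section RecordedBefore.
Context {Tx Hash : Type} {hash : block Tx Hash -> Hash}
        {genesis : block Tx Hash} {BT : blocktree Tx Hash}.

Definition chain_txs (c : list (block Tx Hash)) : list Tx :=
  concat (map (@btxs Tx Hash) c).

(* [recorded_before] unfolds to [before_in_chain c] for some consensus chain [c]. *)
Definition before_in_chain (c : list (block Tx Hash)) (ty tx : Tx) : Prop :=
  exists k l Bk Bl, nth_error c k = Some Bk /\ nth_error c l = Some Bl /\
    ((k < l /\ In ty (btxs Bk) /\ In tx (btxs Bl)) \/
     (k = l /\ occurs_before (btxs Bk) ty tx)).

Lemma before_in_chain_occurs_before c ty tx :
  before_in_chain c ty tx -> occurs_before (chain_txs c) ty tx.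
Proof.
  intros (k & l & Bk & Bl & Hk & Hl & [(Hkl & Hy & Hx) | (-> & Hyx)]);
    unfold chain_txs.
  - apply (occurs_before_concat_lt _ k l (btxs Bk) (btxs Bl)); auto;
      now apply map_nth_error.
  - apply (occurs_before_concat_same _ l (btxs Bk)); auto.
    now apply map_nth_error.
Qed.

Lemma recorded_before_recorded {ty tx} :
  recorded_before hash genesis BT ty tx -> recorded hash genesis BT ty.
Proof.
  intros (c & Hc & k & l & Bk & Bl & Hk & Hl & Hor).
  exists c. split; [exact Hc |]. exists Bk.
  split; [eapply nth_error_In; exact Hk |].
  destruct Hor as [(_ & Hy & _) | (_ & l1 & l2 & l3 & ->)]; [exact Hy |].
  apply in_or_app. now right; left.
Qed.

Lemma recorded_before_asym {ty tx} :
  valid hash genesis BT ->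
  (forall c, consensus_chain hash genesis BT c -> NoDup (chain_txs c)) ->
  recorded_before hash genesis BT ty tx ->
  ~ recorded_before hash genesis BT tx ty.
Proof.
  intros (c0 & _ & Hunique) Hnodup (c & Hc & Hyx) (c' & Hc' & Hxy).
  assert (c = c0) as -> by now apply Hunique.
  assert (c' = c0) as -> by now apply Hunique.
  eapply occurs_before_asym; [exact (Hnodup _ Hc) | |];
    apply before_in_chain_occurs_before; eassumption.
Qed.

End RecordedBefore.

Lemma hb_tx_deliver_send {Proc Msg Tx : Type}
    {hist : Proc -> list (event Msg)} {sender : Msg -> Proc}
    {contains : Msg -> Tx -> Prop} {p : Proc} {mx my tx ty} :
  contains mx tx -> contains my ty ->
  occurs_before (hist p) (EDeliver mx) (ESend my) ->
  hb_tx hist sender contains tx ty.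
Proof.
  intros Hx Hy Hob. exists mx, my.
  repeat split; auto. eapply hb_send_after_deliver; exact Hob.
Qed.

Lemma strong_safety_recorded_before {Proc Msg Tx Hash : Type}
    {hist : Proc -> list (event Msg)} {sender : Msg -> Proc}
    {contains : Msg -> Tx -> Prop}
    {hash : block Tx Hash -> Hash} {genesis : block Tx Hash}
    {BT : blocktree Tx Hash} {tx ty} :
  strong_safety hist sender contains hash genesis BT ->
  hb_tx hist sender contains tx ty ->
  recorded_before hash genesis BT ty tx ->
  recorded_before hash genesis BT tx ty.
Proof.
  intros Hsafe Htx Hyx.
  exact (Hsafe ty tx (recorded_before_recorded Hyx) Htx).
Qed.

Theorem theorem1 (Proc Msg Tx Hash : Type)
    (hist : Proc -> list (event Msg)) (sender : Msg -> Proc)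
    (contains : Msg -> Tx -> Prop)
    (hash : block Tx Hash -> Hash) (genesis : block Tx Hash)
    (BT : blocktree Tx Hash)
    (M : Proc) (mx my : Msg) (tx ty : Tx) :
  valid hash genesis BT ->
  (* each transaction is recorded at most once in the consensus chain *)
  (forall c, consensus_chain hash genesis BT c -> NoDup (concat (map (@btxs Tx Hash) c))) ->
  contains mx tx ->
  contains my ty ->
  (* M reads t_x (delivers m_x) and afterwards broadcasts t_y in m_y *)
  occurs_before (hist M) (EDeliver mx) (ESend my) ->
  (* the attack succeeds *)
  recorded_before hash genesis BT ty tx ->
  hb_tx hist sender contains tx ty /\ hb hist sender mx my /\
  ~ strong_safety hist sender contains hash genesis BT.
Proof.
  intros Hvalid Hnodup Hx Hy Hread Hattack.
  assert (Htx : hb_tx hist sender contains tx ty)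
    by exact (hb_tx_deliver_send Hx Hy Hread).
  split; [exact Htx | split].
  - eapply hb_send_after_deliver; exact Hread.
  - intros Hsafe.
    apply (recorded_before_asym Hvalid Hnodup Hattack).
    exact (strong_safety_recorded_before Hsafe Htx Hattack).
Qed.
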